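(* Let $E$ be a finite set of events with timestamps $\tau(e)\in\mathbb{R}$, let $t_w>0$ be real and $n\ge1$ an integer, and let $\mathcal{I}$ be the family of all $T\subseteq E$ with $|\{e\in T:\tau(e)\in[t,t+t_w)\}|\le n$ for every $t\in\mathbb{R}$. Let $Y\subseteq E$ and let $J_{\min}$, $J_{\max}$ be bases of $Y$ of minimum and maximum cardinality, respectively. For $e\in E$ let $\mathrm{ball}(e)=(\tau(e)-t_w,\tau(e)+t_w)$. Define the DeletionStep, taking a pair $(J_{\min},J_{\max})$ with $J_{\min}\neq\emptyset$ to a pair $(J'_{\min},J'_{\max})$: let $b$ be an element of $J_{\min}$ with minimum timestamp and set $J'_{\min}=J_{\min}\setminus\{b\}$; list the elements of $\{a\in J_{\max}:\tau(a)\in\mathrm{ball}(b)\}$ in increasing order of timestamp and let $J'_{\max}$ be $J_{\max}$ with the first two of these removed (or with all of them removed if there are fewer than two). Then the invariant ''for every $a\in J_{\max}$ there exists $c\in J_{\min}$ with $\tau(c)\in\mathrm{ball}(a)$'' holds for the initial pair $(J_{\min},J_{\max})$, and it also holds (with $J_{\min},J_{\max}$ replaced by the current sets) for the pair obtained after any number of successive iterations of DeletionStep starting from $(J_{\min},J_{\max})$.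
   Context: A base of $Y$ is an inclusion-maximal subset $J\subseteq Y$ with $J\in\mathcal{I}$. *)

From HB Require Import structures.
From mathcomp Require Import all_boot all_order all_algebra.
From mathcomp Require Import reals.
Set Implicit Arguments. Unset Strict Implicit. Unset Printing Implicit Defensive.
Import Order.TTheory GRing.Theory Num.Theory.
Local Open Scope ring_scope.

Section Defs.
Variables (R : realType) (T : finType) (tau : T -> R) (tw : R) (n : nat).

Definition indep (S : {set T}) : Prop :=
  forall t : R, (#|[set e in S | ((t <= tau e)%R && (tau e < t + tw)%R)]| <= n)%N.

Definition is_base (Y J : {set T}) : Prop :=
  [/\ J \subset Y, indep J &
      forall J' : {set T}, J \subset J' -> J' \subset Y -> indep J' -> J' = J].

Definition is_min_base (Y J : {set T}) : Prop :=
  is_base Y J /\ forall J', is_base Y J' -> (#|J| <= #|J'|)%N.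

Definition is_max_base (Y J : {set T}) : Prop :=
  is_base Y J /\ forall J', is_base Y J' -> (#|J'| <= #|J|)%N.

Definition in_ball (b a : T) : bool := (tau b - tw < tau a) && (tau a < tau b + tw).

(* One DeletionStep from (Jmin, Jmax) to (Jmin', Jmax'); all admissible
   tie-breaking choices are allowed: b is any element of Jmin of minimum
   timestamp, and Rm is the set of the first min(2, |L|) elements of
   L = {a in Jmax | tau a in ball(b)} for some listing in increasing
   order of timestamp. *)
Definition deletion_step (p q : {set T} * {set T}) : Prop :=
  let: (Jmin, Jmax) := p in
  let: (Jmin', Jmax') := q in
  Jmin != set0 /\
  exists b, [/\ b \in Jmin, (forall c, c \in Jmin -> tau b <= tau c),
     Jmin' = Jmin :\ b &
     let L := [set a in Jmax | in_ball b a] in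
     exists Rm : {set T},
       [/\ Rm \subset L, #|Rm| = minn 2 #|L|,
           (forall x y, x \in Rm -> y \in L :\: Rm -> tau x <= tau y) &
           Jmax' = Jmax :\: Rm]].

Fixpoint steps (k : nat) (p q : {set T} * {set T}) : Prop :=
  match k with
  | O => q = p
  | S k' => exists r, deletion_step p r /\ steps k' r q
  end.

Definition ball_invariant (p : {set T} * {set T}) : Prop :=
  forall a, a \in p.2 -> exists c, c \in p.1 /\ in_ball a c.

End Defs.

From mathcomp Require Import all_boot all_order all_algebra.
From mathcomp Require Import reals.
From mathcomp Require Import lra zify.
From Stdlib Require Import Classical.
Import Order.TTheory GRing.Theory Num.Theory.
Set Implicit Arguments. Unset Strict Implicit. Unset Printing Implicit Defensive.
Local Open Scope ring_scope.

(* The ball invariant is the case [p = q] of a Hall-type condition: every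
   closed time interval [p, q] holds at most twice as many events of J_max as
   J_min has within distance t_w of it.  It holds initially because J_min is
   maximal: every event of J_max outside J_min sits in a full window of J_min,
   which pays for the (at most 2n) events of J_max in two consecutive windows.
   A DeletionStep removes the earliest event b of J_min; the condition forces
   all of J_max to lie after tau b - t_w, and removing the first two events of
   J_max near b restores the count. *)

Lemma card_setU_disjoint (T : finType) (A B : {set T}) :
  (forall x, x \in A -> x \notin B) -> #|A :|: B| = (#|A| + #|B|)%N.
Proof.
move=> dAB; rewrite cardsU; suff -> : A :&: B = set0 by rewrite cards0 subn0.
by apply/setP => x; rewrite !inE; apply/negbTE/andP => -[/dAB/negP].
Qed.

Section HallCondition.
Variables (R : realType) (T : finType) (tau : T -> R) (tw : R).

Definition within (S : {set T}) (p q : R) :=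
  [set x in S | (p <= tau x) && (tau x <= q)].

Definition near (S : {set T}) (p q : R) :=
  [set x in S | (p - tw < tau x) && (tau x < q + tw)].

Definition hall_condition (A B : {set T}) :=
  forall p q, (#|within B p q| <= 2 * #|near A p q|)%N.

Lemma hall_ball_invariant A B :
  hall_condition A B -> ball_invariant tau tw (A, B).
Proof.
move=> hAB a aB /=; have := hAB (tau a) (tau a).
have [->|[c]] := set_0Vmem (near A (tau a) (tau a)).
  rewrite cards0 muln0 leqn0 cards_eq0 => /eqP/setP/(_ a).
  by rewrite !inE aB !lexx.
by rewrite !inE => /andP[cA ac] _; exists c.
Qed.

Definition before (S : {set T}) (t : R) := [set x in S | tau x < t].

Definition window (S : {set T}) (t : R) :=
  [set e in S | (t <= tau e) && (tau e < t + tw)].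

Lemma base_full_window n Y J z : is_base tau tw n Y J -> z \in Y -> z \notin J ->
  exists t, [/\ t <= tau z, tau z < t + tw & (n <= #|window J t|)%N].
Proof.
move=> [JY Jindep Jmax] zY zJ.
have /not_all_ex_not[t /negP] : ~ indep tau tw n (z |: J).
  move=> zJindep; move/negP: zJ; apply.
  by rewrite -(Jmax (z |: J)) ?setU11 ?subsetUr // subUset sub1set zY.
rewrite -ltnNge => big; have {}big : (n < #|window (z |: J) t|)%N := big.
have [/andP[tz zt]|zt] := boolP ((t <= tau z) && (tau z < t + tw)).
  exists t; split=> //.
  have : window (z |: J) t \subset z |: window J t.
    by apply/subsetP => x; rewrite !inE => /andP[/orP[->|->]] //= ->; rewrite orbT.
  move=> /subset_leq_card; rewrite cardsU1.
  by have := leq_b1 (z \notin window J t); lia.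
suff : window (z |: J) t \subset window J t.
  by move=> /subset_leq_card; have : (#|window J t| <= n)%N := Jindep t; lia.
apply/subsetP => x; rewrite !inE => /andP[/orP[/eqP->|->] //].
by rewrite (negbTE zt).
Qed.

Lemma card_within_split S p q t :
  (#|within S p q| <= #|before (within S p q) t| + #|window S t|
     + #|window S (t + tw)%R| + #|within S (t + 2 * tw)%R q|)%N.
Proof.
have : within S p q \subset
    before (within S p q) t :|: window S t :|: window S (t + tw)
      :|: within S (t + 2 * tw) q.
  apply/subsetP => x; rewrite !inE => /and3P[xS px xq]; rewrite xS px xq /=.
  case: ltP => //= tx; case: ltP => //= ttx; case: ltP => //= tx2; rewrite andbT; lra.
move=> /subset_leq_card; move/leq_trans; apply.
apply: leq_trans (leq_card_setU _ _) _; rewrite leq_add2r.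
apply: leq_trans (leq_card_setU _ _) _; rewrite leq_add2r.
exact: leq_card_setU.
Qed.

Lemma card_setU_split_at (A B : {set T}) s :
  (forall x, x \in A -> tau x < s) -> (forall x, x \in B -> s <= tau x) ->
  #|A :|: B| = (#|A| + #|B|)%N.
Proof.
move=> As Bs; apply: card_setU_disjoint => x /As xs.
by apply/negP => /Bs; rewrite leNgt xs.
Qed.

Lemma card_near_split S p q t : 0 <= tw -> p - tw < t -> t <= q ->
  (#|before (near S p q) t| + #|window S t|
     + #|near S (t + 2 * tw)%R q| <= #|near S p q|)%N.
Proof.
move=> tw0 pt tq.
rewrite -(@card_setU_split_at _ _ t); first last.
- by move=> x; rewrite !inE => /and3P[].
- by move=> x; rewrite !inE => /andP[].
rewrite -(@card_setU_split_at _ _ (t + tw)); first last.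
- by move=> x; rewrite !inE => /and3P[_ tx _]; lra.
- move=> x; rewrite !inE => /orP[/andP[_ xt]|/and3P[]]; lra.
apply: subset_leq_card; apply/subsetP => x; rewrite !inE.
case/orP => [/orP[/andP[/and3P[-> -> ->] //]|/and3P[-> tx xt]]|/and3P[-> tx ->]].
  by rewrite /=; apply/andP; split; lra.
by rewrite /= andbT; lra.
Qed.

Lemma hall_condition_base n (Y J1 J2 : {set T}) : 0 < tw ->
  is_base tau tw n Y J1 -> J2 \subset Y -> indep tau tw n J2 ->
  hall_condition J1 J2.
Proof.
move=> tw0 J1base J2Y J2indep p q.
have [k] := ubnP #|within J2 p q|; elim: k p q => // k IH p q ltk.
have [sub|/subsetPn[z0 z0W z0J1]] := boolP (within J2 p q \subset J1).
  apply: leq_trans (_ : #|near J1 p q| <= _)%N; last by rewrite mulSn leq_addr.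
  apply: subset_leq_card; apply/subsetP => x xW.
  move: (subsetP sub x xW) (xW); rewrite !inE => -> /and3P[_ px xq] /=.
  by apply/andP; split; lra.
(* z is the earliest event of J2 in [p, q] missing from J1; its full J1-window
   pays for the events of J2 in [t, t + 2 tw). *)
set D := within J2 p q :\: J1.
have z0D : z0 \in D by rewrite inE z0W z0J1.
have [z zD zmin] := @arg_minP _ R T z0 (fun x => x \in D) tau z0D.
move: (zD); rewrite !inE => /andP[zJ1 /and3P[zJ2 pz zq]].
have [t [tz zt J1full]] := base_full_window J1base (subsetP J2Y z zJ2) zJ1.
have before_z : before (within J2 p q) t \subset before (near J1 p q) t.
  apply/subsetP => x; rewrite !inE => /andP[/and3P[xJ2 px xq] xt].
  have xJ1 : x \in J1.
    apply/negPn/negP => xJ1.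
    by have := zmin x; rewrite !inE xJ1 xJ2 px xq => /(_ isT); lra.
  by rewrite xJ1 xt /= andbT; apply/andP; split; lra.
have shrink : (#|within J2 (t + 2 * tw) q| < #|within J2 p q|)%N.
  apply: proper_card; apply/properP; split.
    by apply/subsetP => x; rewrite !inE => /and3P[-> tx ->]; rewrite andbT; lra.
  exists z; first by rewrite !inE zJ2 pz zq.
  by rewrite !inE zJ2 /= negb_and -ltNge; apply/orP; left; lra.
have pt : p - tw < t by lra.
have tq : t <= q by lra.
apply: leq_trans (card_within_split J2 p q t) _.
apply: leq_trans _ (leq_mul (leqnn 2) (card_near_split J1 (ltW tw0) pt tq)).
rewrite !mulnDr; apply: leq_add; last exact: IH (leq_trans shrink ltk).
rewrite -addnA; apply: leq_add.
  by rewrite (leq_trans (subset_leq_card before_z)) // leq_pmull.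
by rewrite mul2n -addnn leq_add // (leq_trans (J2indep _) J1full).
Qed.

Lemma hall_stamp_lower_bound A B b :
  hall_condition A B -> (forall c, c \in A -> tau b <= tau c) ->
  forall x, x \in B -> tau b - tw < tau x.
Proof.
move=> hAB bmin x xB; have [c [cA /andP[_ cx]]] := hall_ball_invariant hAB xB.
by have := bmin c cA; lra.
Qed.

Lemma card_near_setD1 (A : {set T}) b p q : b \in A -> p - tw < tau b < q + tw ->
  #|near A p q| = (#|near (A :\ b) p q|).+1.
Proof.
move=> bA bpq; rewrite (cardsD1 b) !inE bA bpq add1n; congr _.+1.
by apply: eq_card => c; rewrite !inE andbA.
Qed.

Section DeletionStep.
Variables (A B : {set T}) (b : T) (Rm : {set T}).
Hypotheses (hAB : hall_condition A B) (bA : b \in A)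
  (bmin : forall c, c \in A -> tau b <= tau c).
Let L := [set a in B | in_ball tau tw b a].
Hypothesis RmL : Rm \subset L.

Lemma card_within_delete_ball p q :
  (#|within (B :\: L) p q| <= 2 * #|near (A :\ b) p q|)%N.
Proof.
(* Moving the left end past tau b + tw loses no event of B :\: L and drops b. *)
set p1 := Order.max p (tau b + tw).
have [p_p1 b_p1] : p <= p1 /\ tau b + tw <= p1 by rewrite !le_max !lexx orbT.
have sub1 : within (B :\: L) p q \subset within B p1 q.
  apply/subsetP => x; rewrite !inE.
  move=> /and3P[/andP[xL xB] px ->]; rewrite xB andbT /p1 ge_max px /=.
  move: xL; rewrite xB /in_ball (hall_stamp_lower_bound hAB bmin xB) /= -leNgt.
  by move=> ?; lra.
have near1 : near A p1 q \subset near (A :\ b) p q.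
  apply/subsetP => c; rewrite !inE.
  move=> /andP[cA /andP[c1 ->]]; rewrite cA andbT.
  have bc : tau b < tau c by lra.
  rewrite (_ : p - tw < tau c) ?andbT; last by lra.
  by apply: contraTneq bc => ->; rewrite ltxx.
apply: leq_trans (subset_leq_card sub1) (leq_trans (hAB p1 q) _).
by rewrite leq_mul2l subset_leq_card ?orbT.
Qed.

Hypothesis Rm_first :
  forall x y, x \in Rm -> y \in L :\: Rm -> tau x <= tau y.

Lemma within_delete_past p q r :
  r \in Rm -> q < tau r -> within (B :\: Rm) p q = set0.
Proof.
move=> rRm qr; apply/setP => x; rewrite !inE; apply/negbTE/negP.
move=> /and3P[/andP[xRm xB] _ xq].
move: (subsetP RmL r rRm); rewrite inE /in_ball => /andP[_ /andP[_ rb]].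
have xL : x \in L :\: Rm.
  by rewrite !inE xRm xB /in_ball (hall_stamp_lower_bound hAB bmin xB) /=; lra.
by have := Rm_first rRm xL; lra.
Qed.

Lemma card_within_delete_pair p q :
  p - tw < tau b < q + tw -> #|Rm| = 2%N -> (forall r, r \in Rm -> tau r <= q) ->
  (#|within (B :\: Rm) p q| <= 2 * #|near (A :\ b) p q|)%N.
Proof.
move=> /andP[pb bq] cardRm Rm_q.
(* Moving the left end down to tau b - tw adds both removed events of B but no
   event of A, all of which lie at or after tau b. *)
set p0 := Order.min p (tau b - tw).
have [p0_p p0_b] : p0 <= p /\ p0 <= tau b - tw by rewrite !ge_min !lexx orbT.
have sub0 : within (B :\: Rm) p q :|: Rm \subset within B p0 q.
  apply/subsetP => x; rewrite !inE => /orP[/and3P[/andP[_ ->] px ->]|xRm].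
    by rewrite andbT /=; lra.
  move: (subsetP RmL x xRm); rewrite inE /in_ball => /andP[-> /andP[bx _]].
  by rewrite Rm_q // andbT; lra.
have near0 : (#|near A p0 q| <= #|near A p q|)%N.
  apply: subset_leq_card; apply/subsetP => c; rewrite !inE.
  move=> /andP[cA /andP[_ ->]]; rewrite cA andbT /=.
  by have := bmin cA; lra.
have := subset_leq_card sub0; rewrite card_setU_disjoint; last first.
  by move=> x; rewrite !inE => /and3P[/andP[]].
move: near0; rewrite (card_near_setD1 (p:=p) (q:=q) bA); last by lra.
have := hAB p0 q.
by lia.
Qed.

End DeletionStep.

Lemma hall_deletion_step A B A' B' : hall_condition A B ->
  deletion_step tau tw (A, B) (A', B') -> hall_condition A' B'.
Proof.
move=> hAB [_ [b [bA bmin -> [Rm [RmL cardRm Rm_first ->]]]]] p q.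
set L := [set a in B | in_ball tau tw b a] in RmL cardRm Rm_first.
have [smallL|bigL] := ltnP #|L| 2.
  have -> : Rm = L.
    by apply/eqP; rewrite eqEcard RmL cardRm (minn_idPr (ltnW smallL)) /=.
  exact: card_within_delete_ball.
have {}cardRm : #|Rm| = 2%N by rewrite cardRm; apply/minn_idPl.
have [bpq|bfar] := boolP (p - tw < tau b < q + tw); last first.
  have -> : near (A :\ b) p q = near A p q.
    apply/setP => c; rewrite !inE.
    by case: eqVneq => [->|] //=; rewrite (negbTE bfar) andbF.
  apply: leq_trans (hAB p q); apply: subset_leq_card.
  by apply/subsetP => x; rewrite !inE => /and3P[/andP[_ ->] -> ->].
have [/existsP[r /andP[rRm qr]]|] := boolP [exists r in Rm, q < tau r].
  by rewrite (within_delete_past hAB bmin RmL Rm_first _ rRm qr) cards0.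
rewrite negb_exists => /forallP Rm_q.
apply: card_within_delete_pair => // r rRm.
by have := Rm_q r; rewrite rRm /= -leNgt.
Qed.


Lemma hall_condition_steps k p q : hall_condition p.1 p.2 ->
  steps tau tw k p q -> hall_condition q.1 q.2.
Proof.
elim: k p => [|k IH] [A B] /= hAB; first by move=> ->.
by case=> -[A' B'] [step rest]; apply: (IH (A', B') (hall_deletion_step hAB step)).
Qed.

End HallCondition.

Theorem lemma3 (R : realType) (T : finType) (tau : T -> R) (tw : R) (n : nat)
  (htw : 0 < tw) (hn : (1 <= n)%N) (Y Jmin Jmax : {set T})
  (hmin : is_min_base tau tw n Y Jmin) (hmax : is_max_base tau tw n Y Jmax) :
  ball_invariant tau tw (Jmin, Jmax) /\
  (forall (k : nat) (q : {set T} * {set T}),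
     steps tau tw k (Jmin, Jmax) q -> ball_invariant tau tw q).
Proof.
have hall0 : hall_condition tau tw Jmin Jmax.
  case: hmin => Jmin_base _; case: hmax => [[JmaxY Jmax_indep _] _].
  exact: hall_condition_base htw Jmin_base JmaxY Jmax_indep.
split; first exact: hall_ball_invariant.
move=> k [A B] /(hall_condition_steps (p := (Jmin, Jmax)) hall0).
exact: hall_ball_invariant.
Qed.
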